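(* Let $G,H$ be groups, $\omega_G,\omega_H$ normalized 3-cocycles with values in $\mathbb F^\times$, and $\omega((g_1,h_1),(g_2,h_2),(g_3,h_3)):=\omega_G(g_1,g_2,g_3)\,\omega_H^{-1}(h_3^{-1},h_2^{-1},h_1^{-1})$. Fix a $G\times H$-set $X$. The assignments $\mathcal B(X,\Psi,\Phi,\Omega)\mapsto\mathcal M(X,\Gamma')$ and $\mathcal M(X,\Gamma)\mapsto\mathcal B(X,\tilde\Psi,\tilde\Phi,\tilde\Omega)$, where $$\Gamma'((g_1,h_1),(g_2,h_2),x)=\Psi(g_1,g_2,(h_2^{-1}h_1^{-1})\cdot x)\,\Phi(h_1,h_2,x)\,\Omega(g_1,h_2,h_1^{-1}\cdot x),$$ $$\tilde\Psi(g_1,g_2,x)=\Gamma((g_1,1),(g_2,1),x),\ \tilde\Phi(h_1,h_2,x)=\Gamma((1,h_1),(1,h_2),x),\ \tilde\Omega(g,h,x)=\Gamma((g,1),(1,h),x),$$ are well defined and mutually inverse bijections between the semisimple $(\mathrm{Vec}_G^{\omega_G},\mathrm{Vec}_H^{\omega_H})$-bimodule categories of the form $\mathcal B(X,\Psi,\Phi,\Omega)$ and the semisimple $\mathrm{Vec}_{G\times H}^\omega$-module categories of the form $\mathcal M(X,\Gamma)$.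
   Context: $\mathbb F$ algebraically closed; $\mathrm{Vec}_K^\eta$ as usual (finite-dimensional $K$-graded spaces, $\delta^k\otimes\delta^{k'}=\delta^{kk'}$, associator $\eta$). In the $G\times H$-set $X$ write $g\cdot x=(g,1)\cdot x$ and $h\cdot x=(1,h)\cdot x$. The data $\mathcal B(X,\Psi,\Phi,\Omega)$: normalized maps $\Psi:G\times G\times X\to\mathbb F^\times$, $\Phi:H\times H\times X\to\mathbb F^\times$, $\Omega:G\times H\times X\to\mathbb F^\times$ with $\Psi(g_2,g_3,g_1^{-1}\cdot x)\Psi^{-1}(g_1g_2,g_3,x)\Psi(g_1,g_2g_3,x)\Psi^{-1}(g_1,g_2,x)=\omega_G^{-1}(g_1,g_2,g_3)$; $\Phi(h_2,h_3,h_1^{-1}\cdot x)\Phi^{-1}(h_1h_2,h_3,x)\Phi(h_1,h_2h_3,x)\Phi^{-1}(h_1,h_2,x)=\omega_H(h_3^{-1},h_2^{-1},h_1^{-1})$; $\Omega(g_2,h,g_1^{-1}\cdot x)\Omega^{-1}(g_1g_2,h,x)\Omega(g_1,h,x)=\Psi(g_1,g_2,x)\Psi^{-1}(g_1,g_2,h^{-1}\cdot x)$; $\Omega(g,h_2,h_1^{-1}\cdot x)\Omega^{-1}(g,h_1h_2,x)\Omega(g,h_1,x)=\Phi^{-1}(h_1,h_2,x)\Phi(h_1,h_2,g^{-1}\cdot x)$. The bimodule category $\mathcal B(X,\Psi,\Phi,\Omega)$ is the category of finite-dimensional $X$-graded spaces with $\delta^g\triangleright x=g\cdot x$, $x\triangleleft\delta^h=h^{-1}\cdot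 x$, left constraint $m_{g_1,g_2,x}=\Psi(g_1,g_2,(g_1g_2)\cdot x)\mathrm{id}$, right constraint $n_{x,h_1,h_2}=\Phi(h_2^{-1},h_1^{-1},(h_1h_2)^{-1}\cdot x)\mathrm{id}:x\triangleleft(\delta^{h_1}\otimes\delta^{h_2})\to(x\triangleleft\delta^{h_1})\triangleleft\delta^{h_2}$, and middle constraint $b_{g,x,h}=\Omega(g,h^{-1},(g,h^{-1})\cdot x)\mathrm{id}:(\delta^g\triangleright x)\triangleleft\delta^h\to\delta^g\triangleright(x\triangleleft\delta^h)$. The data $\mathcal M(X,\Gamma)$: normalized $\Gamma:(G\times H)^2\times X\to\mathbb F^\times$ with $\Gamma(u_2,u_3,u_1^{-1}\cdot x)\Gamma^{-1}(u_1u_2,u_3,x)\Gamma(u_1,u_2u_3,x)\Gamma^{-1}(u_1,u_2,x)=\omega^{-1}(u_1,u_2,u_3)$ and additionally $\Gamma((1,h),(g,1),x)=1$ for all $g,h,x$; $\mathcal M(X,\Gamma)$ is the $\mathrm{Vec}_{G\times H}^\omega$-module category of $X$-graded spaces with $\delta^u\triangleright x=u\cdot x$ and constraint $\Gamma(u,v,(uv)\cdot x)\mathrm{id}$. *)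

From HB Require Import structures.
From mathcomp Require Import all_boot all_algebra.
From mathcomp Require Import fingroup.

Set Implicit Arguments.
Unset Strict Implicit.
Unset Printing Implicit Defensive.

Import GRing.Theory.
Local Open Scope ring_scope.

Section Defs.

Variable F : fieldType.

Definition pmul (G H : groupType) (u v : G * H) : G * H :=
  ((u.1 * v.1)%g, (u.2 * v.2)%g).
Definition pone (G H : groupType) : G * H := (1%g, 1%g).
Definition pinv (G H : groupType) (u : G * H) : G * H := ((u.1)^-1%g, (u.2)^-1%g).

Definition is_GH_action (G H : groupType) (X : Type) (act : G * H -> X -> X) :=
  (forall x, act (pone G H) x = x) /\
  (forall u v x, act (pmul u v) x = act u (act v x)).

Definition normalized_3cocycle (G : groupType) (w : G -> G -> G -> F) :=
  (forall a b c, w a b c != 0) /\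
  (forall a b, w 1%g a b = 1 /\ w a 1%g b = 1 /\ w a b 1%g = 1) /\
  (forall g1 g2 g3 g4,
      w g2 g3 g4 * w g1 (g2 * g3)%g g4 * w g1 g2 g3
      = w (g1 * g2)%g g3 g4 * w g1 g2 (g3 * g4)%g).

Definition omega_prod (G H : groupType) (wG : G -> G -> G -> F)
  (wH : H -> H -> H -> F) (u1 u2 u3 : G * H) : F :=
  wG u1.1 u2.1 u3.1 * (wH (u3.2)^-1%g (u2.2)^-1%g (u1.2)^-1%g)^-1.

Definition is_B_data (G H : groupType) (wG : G -> G -> G -> F)
  (wH : H -> H -> H -> F) (X : Type) (act : G * H -> X -> X)
  (Psi : G -> G -> X -> F) (Phi : H -> H -> X -> F) (Omega : G -> H -> X -> F) :=
  let gact (g : G) x := act (g, 1%g) x in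
  let hact (h : H) x := act (1%g, h) x in
  ((forall g1 g2 x, Psi g1 g2 x != 0) /\
      (forall h1 h2 x, Phi h1 h2 x != 0) /\
      (forall g h x, Omega g h x != 0)) /\
  ((forall g x, Psi 1%g g x = 1 /\ Psi g 1%g x = 1) /\
      (forall h x, Phi 1%g h x = 1 /\ Phi h 1%g x = 1) /\
      (forall g h x, Omega 1%g h x = 1 /\ Omega g 1%g x = 1)) /\
  [/\ (forall g1 g2 g3 x,
         Psi g2 g3 (gact (g1^-1)%g x) * (Psi (g1 * g2)%g g3 x)^-1
         * Psi g1 (g2 * g3)%g x * (Psi g1 g2 x)^-1 = (wG g1 g2 g3)^-1),
      (forall h1 h2 h3 x,
         Phi h2 h3 (hact (h1^-1)%g x) * (Phi (h1 * h2)%g h3 x)^-1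
         * Phi h1 (h2 * h3)%g x * (Phi h1 h2 x)^-1
         = wH (h3^-1)%g (h2^-1)%g (h1^-1)%g),
      (forall g1 g2 h x,
         Omega g2 h (gact (g1^-1)%g x) * (Omega (g1 * g2)%g h x)^-1
         * Omega g1 h x = Psi g1 g2 x * (Psi g1 g2 (hact (h^-1)%g x))^-1) &
      (forall g h1 h2 x,
         Omega g h2 (hact (h1^-1)%g x) * (Omega g (h1 * h2)%g x)^-1
         * Omega g h1 x = (Phi h1 h2 x)^-1 * Phi h1 h2 (gact (g^-1)%g x))].

Definition is_M_data (G H : groupType) (wG : G -> G -> G -> F)
  (wH : H -> H -> H -> F) (X : Type) (act : G * H -> X -> X)
  (Gamma : G * H -> G * H -> X -> F) :=
  [/\ (forall u v x, Gamma u v x != 0),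
      (forall u x, Gamma (pone G H) u x = 1 /\ Gamma u (pone G H) x = 1),
      (forall u1 u2 u3 x,
         Gamma u2 u3 (act (pinv u1) x) * (Gamma (pmul u1 u2) u3 x)^-1
         * Gamma u1 (pmul u2 u3) x * (Gamma u1 u2 x)^-1
         = (omega_prod wG wH u1 u2 u3)^-1) &
      (forall (g : G) (h : H) x, Gamma (1%g, h) (g, 1%g) x = 1)].

Definition Gamma_of_B (G H : groupType) (X : Type) (act : G * H -> X -> X)
  (Psi : G -> G -> X -> F) (Phi : H -> H -> X -> F) (Omega : G -> H -> X -> F)
  (u1 u2 : G * H) (x : X) : F :=
  Psi u1.1 u2.1 (act (1%g, ((u2.2)^-1 * (u1.2)^-1)%g) x)
  * Phi u1.2 u2.2 x
  * Omega u1.1 u2.2 (act (1%g, (u1.2)^-1%g) x).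

Definition Psi_of_M (G H : groupType) (X : Type) (Gamma : G * H -> G * H -> X -> F)
  (g1 g2 : G) (x : X) : F := Gamma (g1, 1%g) (g2, 1%g) x.
Definition Phi_of_M (G H : groupType) (X : Type) (Gamma : G * H -> G * H -> X -> F)
  (h1 h2 : H) (x : X) : F := Gamma (1%g, h1) (1%g, h2) x.
Definition Omega_of_M (G H : groupType) (X : Type) (Gamma : G * H -> G * H -> X -> F)
  (g : G) (h : H) (x : X) : F := Gamma (g, 1%g) (1%g, h) x.

End Defs.

(* Since G and H commute inside G x H, every (g, h) factors as (g, 1)(1, h) = (1, h)(g, 1).
   Four instances of the cocycle condition for Gamma, together with Gamma((1, h), (g, 1)) = 1,
   express Gamma on arbitrary pairs through its restrictions to G x G, H x H and G x H; this
   is exactly the formula for Gamma', so M -> B -> M is the identity, and the remaining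
   cocycle instances restrict to the four equations of B-data.  Conversely, for B-data the
   cocycle condition of Gamma' follows by solving each of the four equations for its first
   factor and substituting, which leaves a field identity. *)
From HB Require Import structures.
From mathcomp Require Import all_boot all_algebra.
From mathcomp Require Import fingroup.
From mathcomp Require Import ring.

Set Implicit Arguments.
Unset Strict Implicit.
Unset Printing Implicit Defensive.

Import GRing.Theory.
Local Open Scope ring_scope.

Section GHAction.

Variables (G H : groupType) (X : Type) (act : G * H -> X -> X).
Hypothesis hact : is_GH_action act.

Lemma GH_act1 x : act (1%g, 1%g) x = x.
Proof. exact: hact.1. Qed.

Lemma GH_actM u v x : act u (act v x) = act ((u.1 * v.1)%g, (u.2 * v.2)%g) x.
Proof. by rewrite -hact.2. Qed.

End GHAction.

Ltac simpl_act hact :=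
  rewrite /= ?(GH_actM hact) /= ?(invg1, mul1g, mulg1, invMg, mulgA) ?(GH_act1 hact).

Section NormalizedCocycle.

Variables (F : fieldType) (G : groupType) (w : G -> G -> G -> F).
Hypothesis hw : normalized_3cocycle w.

Lemma cocycle_neq0 a b c : w a b c != 0.
Proof. exact: hw.1. Qed.

Lemma cocycle1l a b : w 1%g a b = 1.
Proof. by case: (hw.2.1 a b). Qed.

Lemma cocycle1m a b : w a 1%g b = 1.
Proof. by case: (hw.2.1 a b) => _ []. Qed.

Lemma cocycle1r a b : w a b 1%g = 1.
Proof. by case: (hw.2.1 a b) => _ []. Qed.

End NormalizedCocycle.

Section FieldRatios.

Variable F : fieldType.
Lemma ratio4_eq_first {a b c d e : F} :
  b != 0 -> c != 0 -> d != 0 -> a * b^-1 * c * d^-1 = e -> a = e * b * d / c.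
Proof. by move=> hb hc hd <-; field; rewrite hb hc hd. Qed.

Lemma ratio3_eq_first {a b c e : F} :
  b != 0 -> c != 0 -> a * b^-1 * c = e -> a = e * b / c.
Proof. by move=> hb hc <-; field; rewrite hb hc. Qed.

Lemma ratio4_clear {a b c d e : F} :
  b != 0 -> d != 0 -> a * b^-1 * c * d^-1 = e -> a * c = e * b * d.
Proof. by move=> hb hd <-; field; rewrite hb hd. Qed.

Lemma prod2_eq_first {a b c : F} : b != 0 -> a * b = c -> a = c / b.
Proof. by move=> hb <-; field; rewrite hb. Qed.

End FieldRatios.

Section BimoduleToModule.

Variables (F : fieldType) (G H : groupType).
Variables (wG : G -> G -> G -> F) (wH : H -> H -> H -> F).
Hypotheses (hwG : normalized_3cocycle wG) (hwH : normalized_3cocycle wH).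
Variables (X : Type) (act : G * H -> X -> X).
Hypothesis hact : is_GH_action act.
Variables (Psi : G -> G -> X -> F) (Phi : H -> H -> X -> F) (Omega : G -> H -> X -> F).
Hypothesis hB : is_B_data wG wH act Psi Phi Omega.

Let Psi_neq0 g1 g2 x : Psi g1 g2 x != 0. Proof. by case: hB => [[]]. Qed.
Let Phi_neq0 h1 h2 x : Phi h1 h2 x != 0. Proof. by case: hB => [[_ []]]. Qed.
Let Omega_neq0 g h x : Omega g h x != 0. Proof. by case: hB => [[_ []]]. Qed.
Let Psi1l g x : Psi 1%g g x = 1. Proof. by case: hB => _ [[/(_ g x) []]]. Qed.
Let Psi1r g x : Psi g 1%g x = 1. Proof. by case: hB => _ [[/(_ g x) []]]. Qed.
Let Phi1l h x : Phi 1%g h x = 1. Proof. by case: hB => _ [[_ [/(_ h x) []]]]. Qed.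
Let Phi1r h x : Phi h 1%g x = 1. Proof. by case: hB => _ [[_ [/(_ h x) []]]]. Qed.
Let Omega1l h x : Omega 1%g h x = 1.
Proof. by case: hB => _ [[_ [_ /(_ 1%g h x) []]]]. Qed.
Let Omega1r g x : Omega g 1%g x = 1.
Proof. by case: hB => _ [[_ [_ /(_ g 1%g x) []]]]. Qed.

Local Notation Gamma' := (Gamma_of_B act Psi Phi Omega).

Lemma Gamma_of_B_neq0 u v x : Gamma' u v x != 0.
Proof. by rewrite /Gamma_of_B !mulf_neq0. Qed.

Lemma Gamma_of_B1l u x : Gamma' (pone G H) u x = 1.
Proof. by rewrite /Gamma_of_B; simpl_act hact; rewrite Psi1l Phi1l Omega1l !mulr1. Qed.

Lemma Gamma_of_B1r u x : Gamma' u (pone G H) x = 1.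
Proof. by rewrite /Gamma_of_B; simpl_act hact; rewrite Psi1r Phi1r Omega1r !mulr1. Qed.

Lemma Gamma_of_B_HG g h x : Gamma' (1%g, h) (g, 1%g) x = 1.
Proof. by rewrite /Gamma_of_B /= Psi1l Phi1r Omega1l !mulr1. Qed.

Lemma Gamma_of_B_cocycle u1 u2 u3 x :
  Gamma' u2 u3 (act (pinv u1) x) * (Gamma' (pmul u1 u2) u3 x)^-1
  * Gamma' u1 (pmul u2 u3) x * (Gamma' u1 u2 x)^-1
  = (omega_prod wG wH u1 u2 u3)^-1.
Proof.
case: hB => _ [_ [ePsi ePhi eOmegaG eOmegaH]].
case: u1 u2 u3 => [g1 h1] [g2 h2] [g3 h3].
have := ePsi g1 g2 g3 (act (1%g, (h3^-1 * h2^-1 * h1^-1)%g) x).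
have := ePhi h1 h2 h3 x.
have := eOmegaG g1 g2 h3 (act (1%g, (h2^-1 * h1^-1)%g) x).
have := eOmegaH g1 h2 h3 (act (1%g, h1^-1%g) x).
rewrite /Gamma_of_B /pinv /pmul /omega_prod; simpl_act hact.
move=> /(ratio3_eq_first (Omega_neq0 _ _ _) (Omega_neq0 _ _ _)) eH.
move=> /(ratio3_eq_first (Omega_neq0 _ _ _) (Omega_neq0 _ _ _)) eG.
move=> /(ratio4_eq_first (Phi_neq0 _ _ _) (Phi_neq0 _ _ _) (Phi_neq0 _ _ _)) eP.
move=> /(ratio4_eq_first (Psi_neq0 _ _ _) (Psi_neq0 _ _ _) (Psi_neq0 _ _ _)) eS.
rewrite eS eG eH eP; field.
by rewrite ?(cocycle_neq0 hwG, cocycle_neq0 hwH, Psi_neq0, Phi_neq0, Omega_neq0).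
Qed.

Lemma Gamma_of_B_is_M : is_M_data wG wH act Gamma'.
Proof.
split.
- exact: Gamma_of_B_neq0.
- by move=> u x; rewrite Gamma_of_B1l Gamma_of_B1r.
- exact: Gamma_of_B_cocycle.
- exact: Gamma_of_B_HG.
Qed.

Lemma Psi_of_Gamma_of_B g1 g2 x : Psi_of_M Gamma' g1 g2 x = Psi g1 g2 x.
Proof.
by rewrite /Psi_of_M /Gamma_of_B; simpl_act hact; rewrite Phi1l Omega1r !mulr1.
Qed.

Lemma Phi_of_Gamma_of_B h1 h2 x : Phi_of_M Gamma' h1 h2 x = Phi h1 h2 x.
Proof. by rewrite /Phi_of_M /Gamma_of_B /= Psi1l Omega1l mulr1 mul1r. Qed.

Lemma Omega_of_Gamma_of_B g h x : Omega_of_M Gamma' g h x = Omega g h x.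
Proof.
by rewrite /Omega_of_M /Gamma_of_B; simpl_act hact; rewrite Psi1r Phi1l !mul1r.
Qed.

End BimoduleToModule.

Section ModuleToBimodule.

Variables (F : fieldType) (G H : groupType).
Variables (wG : G -> G -> G -> F) (wH : H -> H -> H -> F).
Hypotheses (hwG : normalized_3cocycle wG) (hwH : normalized_3cocycle wH).
Variables (X : Type) (act : G * H -> X -> X).
Hypothesis hact : is_GH_action act.
Variable Gamma : G * H -> G * H -> X -> F.
Hypothesis hM : is_M_data wG wH act Gamma.

Let Gamma_neq0 u v x : Gamma u v x != 0. Proof. by case: hM. Qed.
Let Gamma1l u x : Gamma (1%g, 1%g) u x = 1. Proof. by case: hM => _ /(_ u x) []. Qed.
Let Gamma1r u x : Gamma u (1%g, 1%g) x = 1. Proof. by case: hM => _ /(_ u x) []. Qed.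
Let Gamma_HG g h x : Gamma (1%g, h) (g, 1%g) x = 1. Proof. by case: hM. Qed.

Lemma Gamma_cocycle_mul u1 u2 u3 x :
  Gamma u2 u3 (act (pinv u1) x) * Gamma u1 (pmul u2 u3) x
  = (omega_prod wG wH u1 u2 u3)^-1 * Gamma (pmul u1 u2) u3 x * Gamma u1 u2 x.
Proof. by case: hM => _ _ eGamma _; apply: ratio4_clear; rewrite ?eGamma. Qed.

Local Ltac simpl_cocycle :=
  rewrite ?(cocycle1l hwG, cocycle1m hwG, cocycle1r hwG,
            cocycle1l hwH, cocycle1m hwH, cocycle1r hwH, invr1, mul1r, mulr1).

Lemma Gamma_factor g1 h1 g2 h2 x :
  Gamma (g1, h1) (g2, h2) x =
  Gamma (g1, 1%g) (g2, 1%g) (act (1%g, (h2^-1 * h1^-1)%g) x)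
  * Gamma (1%g, h1) (1%g, h2) x
  * Gamma (g1, 1%g) (1%g, h2) (act (1%g, h1^-1%g) x).
Proof.
have e1 := Gamma_cocycle_mul (1%g, h1) (g1, 1%g) (g2, h2) x.
have e2 := Gamma_cocycle_mul (1%g, h1) (1%g, h2) ((g1 * g2)%g, 1%g) x.
have e3 := Gamma_cocycle_mul (g1, 1%g) (1%g, h2) (g2, 1%g) (act (1%g, h1^-1%g) x).
have e4 := Gamma_cocycle_mul (1%g, h2) (g1, 1%g) (g2, 1%g) (act (1%g, h1^-1%g) x).
move: e1 e2 e3 e4; rewrite /pinv /pmul /omega_prod; simpl_act hact.
rewrite ?Gamma_HG; simpl_cocycle => e1 e2 e3 e4.
by rewrite -e1 e2 e3 -e4; ring.
Qed.

Lemma Gamma_of_B_of_M u v x :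
  Gamma_of_B act (Psi_of_M Gamma) (Phi_of_M Gamma) (Omega_of_M Gamma) u v x = Gamma u v x.
Proof. by case: u v => [g1 h1] [g2 h2]; rewrite Gamma_factor. Qed.

Lemma Psi_of_M_cocycle g1 g2 g3 x :
  Psi_of_M Gamma g2 g3 (act (g1^-1%g, 1%g) x) * (Psi_of_M Gamma (g1 * g2)%g g3 x)^-1
  * Psi_of_M Gamma g1 (g2 * g3)%g x * (Psi_of_M Gamma g1 g2 x)^-1 = (wG g1 g2 g3)^-1.
Proof.
case: hM => _ _ /(_ (g1, 1%g) (g2, 1%g) (g3, 1%g) x) + _.
by rewrite /pinv /pmul /omega_prod; simpl_act hact; simpl_cocycle.
Qed.

Lemma Phi_of_M_cocycle h1 h2 h3 x :
  Phi_of_M Gamma h2 h3 (act (1%g, h1^-1%g) x) * (Phi_of_M Gamma (h1 * h2)%g h3 x)^-1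
  * Phi_of_M Gamma h1 (h2 * h3)%g x * (Phi_of_M Gamma h1 h2 x)^-1
  = wH h3^-1%g h2^-1%g h1^-1%g.
Proof.
case: hM => _ _ /(_ (1%g, h1) (1%g, h2) (1%g, h3) x) + _.
by rewrite /pinv /pmul /omega_prod; simpl_act hact; simpl_cocycle; rewrite invrK.
Qed.

Lemma Omega_of_M_G_equation g1 g2 h x :
  Omega_of_M Gamma g2 h (act (g1^-1%g, 1%g) x) * (Omega_of_M Gamma (g1 * g2)%g h x)^-1
  * Omega_of_M Gamma g1 h x
  = Psi_of_M Gamma g1 g2 x * (Psi_of_M Gamma g1 g2 (act (1%g, h^-1%g) x))^-1.
Proof.
rewrite /Psi_of_M /Omega_of_M.
have := Gamma_cocycle_mul (g1, 1%g) (g2, 1%g) (1%g, h) x.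
have := Gamma_factor g1 1%g g2 h x.
rewrite /pinv /pmul /omega_prod; simpl_act hact.
rewrite ?(Gamma1l, Gamma1r); simpl_cocycle => eGamma; rewrite eGamma.
move=> /(prod2_eq_first (mulf_neq0 (Gamma_neq0 _ _ _) (Gamma_neq0 _ _ _))) ->.
by field; rewrite ?Gamma_neq0.
Qed.

Lemma Omega_of_M_H_equation g h1 h2 x :
  Omega_of_M Gamma g h2 (act (1%g, h1^-1%g) x) * (Omega_of_M Gamma g (h1 * h2)%g x)^-1
  * Omega_of_M Gamma g h1 x
  = (Phi_of_M Gamma h1 h2 x)^-1 * Phi_of_M Gamma h1 h2 (act (g^-1%g, 1%g) x).
Proof.
rewrite /Phi_of_M /Omega_of_M.
have := Gamma_cocycle_mul (g, 1%g) (1%g, h1) (1%g, h2) x.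
have := Gamma_factor g h1 1%g h2 x.
rewrite /pinv /pmul /omega_prod; simpl_act hact.
rewrite ?(Gamma1l, Gamma1r); simpl_cocycle => eGamma; rewrite eGamma.
move=> /(prod2_eq_first (Gamma_neq0 _ _ _)) ->.
by field; rewrite ?Gamma_neq0.
Qed.

Lemma B_of_M_is_B :
  is_B_data wG wH act (Psi_of_M Gamma) (Phi_of_M Gamma) (Omega_of_M Gamma).
Proof.
split; [|split].
- by split; [|split] => *; apply: Gamma_neq0.
- by split; [|split] => *; rewrite /Psi_of_M /Phi_of_M /Omega_of_M Gamma1l Gamma1r.
- split.
  + exact: Psi_of_M_cocycle.
  + exact: Phi_of_M_cocycle.
  + exact: Omega_of_M_G_equation.
  + exact: Omega_of_M_H_equation.
Qed.

End ModuleToBimodule.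

Theorem proposition4p27 (F : closedFieldType) (G H : groupType)
  (wG : G -> G -> G -> F) (wH : H -> H -> H -> F)
  (hwG : normalized_3cocycle wG) (hwH : normalized_3cocycle wH)
  (X : Type) (act : G * H -> X -> X) (hact : is_GH_action act) :
  (* well defined: B-data go to M-data *)
  (forall Psi Phi Omega,
     is_B_data wG wH act Psi Phi Omega ->
     is_M_data wG wH act (Gamma_of_B act Psi Phi Omega)) /\
  (* well defined: M-data go to B-data *)
  (forall Gamma,
     is_M_data wG wH act Gamma ->
     is_B_data wG wH act (Psi_of_M Gamma) (Phi_of_M Gamma) (Omega_of_M Gamma)) /\
  (* B -> M -> B is the identity *)
  (forall Psi Phi Omega,
     is_B_data wG wH act Psi Phi Omega ->
     (forall g1 g2 x, Psi_of_M (Gamma_of_B act Psi Phi Omega) g1 g2 x = Psi g1 g2 x) /\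
     (forall h1 h2 x, Phi_of_M (Gamma_of_B act Psi Phi Omega) h1 h2 x = Phi h1 h2 x) /\
     (forall g h x, Omega_of_M (Gamma_of_B act Psi Phi Omega) g h x = Omega g h x)) /\
  (* M -> B -> M is the identity *)
  (forall Gamma,
     is_M_data wG wH act Gamma ->
     forall u v x,
       Gamma_of_B act (Psi_of_M Gamma) (Phi_of_M Gamma) (Omega_of_M Gamma) u v x
       = Gamma u v x).
Proof.
split; [|split; [|split]].
- move=> Psi Phi Omega hB; exact: (Gamma_of_B_is_M hwG hwH hact hB).
- move=> Gamma hM; exact: (B_of_M_is_B hwG hwH hact hM).
- move=> Psi Phi Omega hB; split; [|split].
  + exact: (Psi_of_Gamma_of_B hact hB).
  + exact: (Phi_of_Gamma_of_B hB).
  + exact: (Omega_of_Gamma_of_B hact hB).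
- move=> Gamma hM; exact: (Gamma_of_B_of_M hwG hwH hact hM).
Qed.
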